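(* Let $A$ be a system of $n_A$ qubits and $B$ a system of $n_B$ qubits, let $\rho_{A_1B_1}$ be a state at time $t_1$, and let $\mathcal{P}$ be a CPTP map from $AB$ at time $t_1$ to $AB$ at time $t_2$. Let $R_{A_1B_1A_2B_2}$ be the two-time pseudo-density matrix of the full system $AB$ and $R_{A_1B_2}$ the pseudo-density matrix constructed from measurements on $A$ at $t_1$ and on $B$ at $t_2$ (both defined in the context). Then $R_{A_1B_2}=\mathrm{Tr}_{B_1A_2}R_{A_1B_1A_2B_2}$.
   Context: Pauli matrices $\sigma_0=\mathbb{1},\sigma_1,\sigma_2,\sigma_3$; multi-qubit Pauli matrices are tensor products of these. The coarse-grained measurement of a Pauli matrix $\Sigma$ on $AB$ is $\{(\mathbb{1}\pm\Sigma)/2\}$ with outcomes $\pm1$ and Lüders update $\rho\mapsto P_\pm\rho P_\pm$. For Paulis $\Sigma_1,\Sigma_2$ on $AB$, $\langle\Sigma_1,\Sigma_2\rangle$ is the expected product of outcomes in: prepare $\rho_{A_1B_1}$, coarse-grained measurement of $\Sigma_1$ at $t_1$, apply $\mathcal{P}$, coarse-grained measurement of $\Sigma_2$ at $t_2$. Then $R_{A_1B_1A_2B_2}=2^{-2(n_A+n_B)}\sum \langle\sigma_i^{A}\otimes\sigma_j^{B},\sigma_k^{A}\otimes\sigma_l^{B}\rangle\,\sigma_i^{A_1}\otimes\sigma_j^{B_1}\otimes\sigma_k^{A_2}\otimes\sigma_l^{B_2}$ (sum over all multi-qubit Paulis $\sigma_i,\sigma_k$ on $A$ and $\sigma_j,\sigma_l$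 on $B$), and $R_{A_1B_2}=2^{-(n_A+n_B)}\sum_{i,l}\langle\sigma_i^A\otimes\mathbb{1}_B,\mathbb{1}_A\otimes\sigma_l^B\rangle\,\sigma_i^{A_1}\otimes\sigma_l^{B_2}$. *)

From HB Require Import structures.
From mathcomp Require Import all_boot all_order all_algebra algC.
Set Implicit Arguments. Unset Strict Implicit. Unset Printing Implicit Defensive.
Import Order.TTheory GRing.Theory Num.Theory.
Local Open Scope ring_scope.

(* Operators on a finite-dimensional Hilbert space with orthonormal basis T,
   represented by their matrix entries  X x y = <x|X|y>. *)
Definition op (T : finType) := T -> T -> algC.

Definition opmul (T : finType) (X Y : op T) : op T :=
  fun x y => \sum_(z : T) X x z * Y z y.
Definition opadd (T : finType) (X Y : op T) : op T := fun x y => X x y + Y x y.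
Definition opscale (T : finType) (a : algC) (X : op T) : op T := fun x y => a * X x y.
Definition opid (T : finType) : op T := fun x y => (x == y)%:R.
Definition opadj (T : finType) (X : op T) : op T := fun x y => (X y x)^*.
Definition optr (T : finType) (X : op T) : algC := \sum_(x : T) X x x.
Definition opsum (I T : finType) (F : I -> op T) : op T :=
  fun x y => \sum_(i : I) F i x y.

Definition tens (T U : finType) (X : op T) (Y : op U) : op (T * U)%type :=
  fun p q => X p.1 q.1 * Y p.2 q.2.

Definition psd (T : finType) (X : op T) : Prop :=
  opadj X = X /\
  forall v : T -> algC, 0 <= \sum_(x : T) \sum_(y : T) (v x)^* * X x y * v y.
Definition is_state (T : finType) (rho : op T) : Prop :=
  psd rho /\ optr rho = 1.

Definition lin_map (T U : finType) (P : op T -> op U) : Prop :=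
  forall (a : algC) (X Y : op T), P (opadd (opscale a X) Y) = opadd (opscale a (P X)) (P Y).
Definition trace_preserving (T U : finType) (P : op T -> op U) : Prop :=
  forall X : op T, optr (P X) = optr X.
(* id_k ⊗ P acting on operators of 'I_k ⊗ T, blockwise *)
Definition ampl (k : nat) (T U : finType) (P : op T -> op U) (X : op ('I_k * T)%type)
  : op ('I_k * U)%type :=
  fun p q => P (fun x y => X (p.1, x) (q.1, y)) p.2 q.2.
Definition completely_positive (T U : finType) (P : op T -> op U) : Prop :=
  forall (k : nat) (X : op ('I_k * T)%type), psd X -> psd (ampl P X).
Definition CPTP (T U : finType) (P : op T -> op U) : Prop :=
  [/\ lin_map P, trace_preserving P & completely_positive P].

Definition qb (n : nat) := {ffun 'I_n -> bool}.

(* single-qubit Paulis sigma_0 = 1, sigma_1, sigma_2, sigma_3 ; false = |0>, true = |1> *)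
Definition pauli1 (i : 'I_4) : op bool :=
  fun x y =>
    match nat_of_ord i with
    | 0 => (x == y)%:R
    | 1 => (x != y)%:R
    | 2 => if x == y then 0 else (if x then 'i else - 'i)
    | _ => if x == y then (if x then -1 else 1) else 0
    end.

Definition pauli (n : nat) (s : {ffun 'I_n -> 'I_4}) : op (qb n) :=
  fun x y => \prod_(k < n) pauli1 (s k) (x k) (y k).

Definition AB (nA nB : nat) := (qb nA * qb nB)%type.

(* coarse-grained measurement of Sigma : projector onto outcome (-1)^(~~b) *)
Definition sgn (b : bool) : algC := if b then 1 else -1.
Definition cproj (T : finType) (Sigma : op T) (b : bool) : op T :=
  opscale (2^-1) (opadd (@opid T) (opscale (sgn b) Sigma)).

(* <Sigma1, Sigma2>: expected product of outcomes when measuring Sigma1 at t1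
   (Lüders update), applying P, then measuring Sigma2 at t2 *)
Definition corr (T : finType) (rho : op T) (P : op T -> op T) (S1 S2 : op T) : algC :=
  \sum_(b1 : bool) \sum_(b2 : bool)
    sgn b1 * sgn b2 *
    optr (opmul (opmul (cproj S2 b2)
                       (P (opmul (opmul (cproj S1 b1) rho) (cproj S1 b1))))
                (cproj S2 b2)).

(* two-time pseudo-density matrix of AB, ordering A1 B1 A2 B2 *)
Definition R_full (nA nB : nat) (rho : op (AB nA nB)) (P : op (AB nA nB) -> op (AB nA nB))
  : op (AB nA nB * AB nA nB)%type :=
  opscale ((2 ^+ (2 * (nA + nB)))^-1)
   (opsum (fun ijkl : (({ffun 'I_nA -> 'I_4} * {ffun 'I_nB -> 'I_4}) *
                      ({ffun 'I_nA -> 'I_4} * {ffun 'I_nB -> 'I_4}))%type =>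
      let: ((i, j), (k, l)) := ijkl in
      opscale (corr rho P (tens (pauli i) (pauli j)) (tens (pauli k) (pauli l)))
              (tens (tens (pauli i) (pauli j)) (tens (pauli k) (pauli l))))).

(* pseudo-density matrix from measurements on A at t1 and B at t2, ordering A1 B2 *)
Definition R_A1B2 (nA nB : nat) (rho : op (AB nA nB)) (P : op (AB nA nB) -> op (AB nA nB))
  : op (AB nA nB) :=
  opscale ((2 ^+ (nA + nB))^-1)
   (opsum (fun il : ({ffun 'I_nA -> 'I_4} * {ffun 'I_nB -> 'I_4})%type =>
      let: (i, l) := il in
      opscale (corr rho P (tens (pauli i) (@opid (qb nB))) (tens (@opid (qb nA)) (pauli l)))
              (tens (pauli i) (pauli l)))).

Definition ptr_B1A2 (nA nB : nat) (R : op (AB nA nB * AB nA nB)%type) : op (AB nA nB) :=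
  fun p q => \sum_(b1 : qb nB) \sum_(a2 : qb nA)
               R ((p.1, b1), (a2, p.2)) ((q.1, b1), (a2, q.2)).

(* Expanding R_A1B1A2B2 in the Pauli basis, the partial trace over B1 and A2
   acts on each term sigma_i (x) sigma_j (x) sigma_k (x) sigma_l by multiplying
   sigma_i (x) sigma_l by Tr sigma_j * Tr sigma_k.  A Pauli matrix is traceless
   unless it is the identity, whose trace is 2^n, so exactly the terms with
   sigma_j = sigma_k = 1 survive; their coefficients are the correlators
   <sigma_i (x) 1, 1 (x) sigma_l> defining R_A1B2, and the powers of 2 match. *)
From HB Require Import structures.
From mathcomp Require Import all_boot all_order all_algebra algC ring.
From Stdlib Require Import FunctionalExtensionality.
Set Implicit Arguments. Unset Strict Implicit. Unset Printing Implicit Defensive.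
Import Order.TTheory GRing.Theory Num.Theory.
Local Open Scope ring_scope.

Lemma opP (T : finType) (X Y : op T) : (forall x y, X x y = Y x y) -> X = Y.
Proof.
by move=> eqXY; do 2![apply: functional_extensionality => ?]; exact: eqXY.
Qed.

Lemma prod_eq_ffun (R : comPzSemiRingType) (I : finType) (T : eqType)
    (f g : {ffun I -> T}) :
  \prod_(k : I) ((f k == g k)%:R : R) = (f == g)%:R.
Proof.
have [->|neq_fg] := eqVneq f g; first by apply: big1 => k _; rewrite eqxx.
have [k neq_fgk] : exists k, f k != g k.
  apply/existsP; apply: contraNT neq_fg => /existsPn eq_fg.
  by apply/eqP/ffunP => k; apply/eqP; rewrite -[_ == _]negbK eq_fg.
by rewrite (bigD1 k) //= (negbTE neq_fgk) mul0r.
Qed.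

Lemma sum_pauli1_diag (c : 'I_4) : \sum_(b : bool) pauli1 c b b = (c == 0)%:R * 2.
Proof.
rewrite big_bool /pauli1.
by case: c => [[|[|[|[|m]]]] lt_c4] //=; rewrite ?mul0r ?addr0 ?mul1r // addNr.
Qed.

Lemma pauli_trace (n : nat) (s : {ffun 'I_n -> 'I_4}) :
  optr (pauli s) = (s == [ffun => 0])%:R * 2 ^+ n.
Proof.
rewrite /optr /pauli -(bigA_distr_bigA (fun k b => pauli1 (s k) b b)) /=.
under eq_bigr do rewrite sum_pauli1_diag.
rewrite big_split /= prodr_const card_ord -prod_eq_ffun.
by under [in RHS]eq_bigr do rewrite ffunE.
Qed.

Lemma pauli_zero (n : nat) : pauli ([ffun => 0] : {ffun 'I_n -> 'I_4}) = @opid (qb n).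
Proof.
by apply: opP => x y; rewrite /pauli /opid -prod_eq_ffun; apply: eq_bigr => k _; rewrite ffunE.
Qed.

Lemma sum_pairs_delta (R : pzSemiRingType) (I J K L : finType) (j0 : J) (k0 : K)
    (F : I -> J -> K -> L -> R) :
  \sum_(x : (I * J) * (K * L))
     (x.1.2 == j0)%:R * (x.2.1 == k0)%:R * F x.1.1 x.1.2 x.2.1 x.2.2
  = \sum_(y : I * L) F y.1 j0 k0 y.2.
Proof.
rewrite -(pair_bigA _ (fun ij kl => (ij.2 == j0)%:R * (kl.1 == k0)%:R * F ij.1 ij.2 kl.1 kl.2)).
rewrite -(pair_bigA _ (fun i j => \sum_(kl : K * L) (j == j0)%:R * (kl.1 == k0)%:R * F i j kl.1 kl.2)).
rewrite -(pair_bigA _ (fun i l => F i j0 k0 l)) /=; apply: eq_bigr => i _.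
rewrite (bigD1 j0) //= [X in _ + X]big1 => [|j /negbTE ->]; last first.
  by apply: big1 => kl _; rewrite !mul0r.
rewrite addr0 -(pair_bigA _ (fun k l => (j0 == j0)%:R * (k == k0)%:R * F i j0 k l)) /=.
rewrite (bigD1 k0) //= [X in _ + X]big1 => [|k /negbTE ->]; last first.
  by apply: big1 => l _; rewrite mulr0 mul0r.
by rewrite addr0; apply: eq_bigr => l _; rewrite !eqxx !mul1r.
Qed.

Section PartialTraceB1A2.

Variables nA nB : nat.
Local Notation ptr := (@ptr_B1A2 nA nB).

Lemma ptr_B1A2_opsum (I : finType) (F : I -> op (AB nA nB * AB nA nB)%type) :
  ptr (opsum F) = opsum (fun i => ptr (F i)).
Proof.
apply: opP => p q; rewrite /ptr_B1A2 /opsum.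
by rewrite [RHS]exchange_big; apply: eq_bigr => b1 _; rewrite [RHS]exchange_big.
Qed.

Lemma ptr_B1A2_scale (a : algC) (X : op (AB nA nB * AB nA nB)%type) :
  ptr (opscale a X) = opscale a (ptr X).
Proof.
apply: opP => p q; rewrite /ptr_B1A2 /opscale /= mulr_sumr.
by under [RHS]eq_bigr do rewrite mulr_sumr.
Qed.

Lemma ptr_B1A2_tens (X : op (qb nA)) (Y : op (qb nB)) (Z : op (qb nA)) (W : op (qb nB)) :
  ptr (tens (tens X Y) (tens Z W)) = opscale (optr Y * optr Z) (tens X W).
Proof.
apply: opP => p q; rewrite /ptr_B1A2 /tens /opscale /optr /= -mulrA mulr_suml.
apply: eq_bigr => b1 _; rewrite mulr_suml mulr_sumr; apply: eq_bigr => a2 _ /=; ring.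
Qed.

Lemma ptr_B1A2_pauli_expansion
    (f : {ffun 'I_nA -> 'I_4} -> {ffun 'I_nB -> 'I_4} ->
         {ffun 'I_nA -> 'I_4} -> {ffun 'I_nB -> 'I_4} -> algC) :
  ptr (opsum (fun ijkl : (({ffun 'I_nA -> 'I_4} * {ffun 'I_nB -> 'I_4}) *
                          ({ffun 'I_nA -> 'I_4} * {ffun 'I_nB -> 'I_4}))%type =>
      let: ((i, j), (k, l)) := ijkl in
      opscale (f i j k l) (tens (tens (pauli i) (pauli j)) (tens (pauli k) (pauli l)))))
  = opscale (2 ^+ (nA + nB))
      (opsum (fun il : ({ffun 'I_nA -> 'I_4} * {ffun 'I_nB -> 'I_4})%type =>
         let: (i, l) := il in
         opscale (f i [ffun => 0] [ffun => 0] l) (tens (pauli i) (pauli l)))).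
Proof.
rewrite ptr_B1A2_opsum; apply: opP => p q; rewrite /opsum /opscale mulr_sumr.
rewrite (eq_bigr (fun x => (x.1.2 == [ffun => 0])%:R * (x.2.1 == [ffun => 0])%:R *
    (2 ^+ (nA + nB) * (f x.1.1 x.1.2 x.2.1 x.2.2 * tens (pauli x.1.1) (pauli x.2.2) p q))));
  last first.
  case=> [[i j] [k l]] _ /=.
  by rewrite ptr_B1A2_scale ptr_B1A2_tens !pauli_trace /opscale exprD /=; ring.
rewrite (sum_pairs_delta _ _
  (fun i j k l => 2 ^+ (nA + nB) * (f i j k l * tens (pauli i) (pauli l) p q))).
by apply: eq_bigr => -[i l].
Qed.

End PartialTraceB1A2.

Theorem mainTheorem5 (nA nB : nat) (rho : op (AB nA nB))
  (P : op (AB nA nB) -> op (AB nA nB)) :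
  is_state rho -> CPTP P ->
  R_A1B2 rho P = ptr_B1A2 (R_full rho P).
Proof.
(* The identity is purely algebraic: it holds for every operator rho and every map P. *)
move=> _ _.
rewrite /R_full ptr_B1A2_scale ptr_B1A2_pauli_expansion !pauli_zero.
apply: opP => p q; rewrite /R_A1B2 /opscale /= mulrA; congr (_ * _).
have two_pow_neq0 : (2 : algC) ^+ (nA + nB) != 0 by rewrite expf_neq0 ?pnatr_eq0.
by rewrite mul2n -addnn [2 ^+ (_ + _ + _)]exprD invfM -mulrA mulVf ?mulr1.
Qed.
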